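(* A finite nilpotent group is a $2$-closed group if and only if it is cyclic or it is isomorphic to a direct product $Q_{2^n}\times C_m$ of a generalized quaternion group $Q_{2^n}$ ($n\geq 3$) with a cyclic group $C_m$ of odd order $m$.
   Context: Permutations act on the right; $\alpha^g$ denotes the image of $\alpha$ under $g$. For a set $\Omega$ and $G\leq{\rm Sym}(\Omega)$, the $2$-closure of $G$ on $\Omega$ is $G^{(2),\Omega}=\{\theta\in{\rm Sym}(\Omega)\mid \forall \alpha,\beta\in\Omega\ \exists g\in G:\ \alpha^\theta=\alpha^g,\ \beta^\theta=\beta^g\}$. An abstract group $G$ is called a $2$-closed group if $H=H^{(2),\Omega}$ for every set $\Omega$ and every subgroup $H\leq{\rm Sym}(\Omega)$ with $H\cong G$. $Q_{2^n}$ denotes the generalized quaternion group of order $2^n$, $n\geq 3$, and $C_m$ the cyclic group of order $m$. *)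

From mathcomp Require Import all_boot all_fingroup all_solvable.
Set Implicit Arguments. Unset Strict Implicit. Unset Printing Implicit Defensive.
Local Open Scope group_scope.

(* A finite group G is 2-closed if for every set Omega and every subgroup
   H <= Sym(Omega) isomorphic to G we have H = H^(2).  Subgroups of Sym(Omega)
   isomorphic to G are exactly the images of faithful (right) actions of G on
   Omega; since H <= H^(2) always holds, H = H^(2) means every permutation
   theta of Omega satisfying the 2-closure condition lies in H. *)
Definition two_closed (gT : finGroupType) (G : {set gT}) : Prop :=
  forall (Omega : Type) (act : Omega -> gT -> Omega),
    (forall a, act a 1 = a) ->
    (forall a g h, g \in G -> h \in G -> act a (g * h) = act (act a g) h) ->
    {in G &, injective (fun g a => act a g)} ->
    forall theta : Omega -> Omega, bijective theta ->
      (forall a b : Omega, exists2 g, g \in G & theta a = act a g /\ theta b = act b g) ->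
      exists2 g, g \in G & forall a, theta a = act a g.

From mathcomp Require Import all_boot all_fingroup all_solvable.
From Stdlib Require Import Classical IndefiniteDescription FunctionalExtensionality.
Set Implicit Arguments. Unset Strict Implicit. Unset Printing Implicit Defensive.
Local Open Scope group_scope.

(* Both conditions are equivalent to: G has a unique subgroup of each prime
   order.  For nilpotent G this says that the odd Sylow subgroups are cyclic
   and the Sylow 2-subgroup is cyclic or generalized quaternion.
   If some subgroup <x> of prime order is not normal, it is core-free; choose
   t in <x> outside N = [<x>^G, G].  On the disjoint union of the coset spaces
   of <x> and of N, the permutation that is trivial on the first and right
   multiplication by t on the second lies in the 2-closure but not in G.  So
   subgroups of prime order are normal, hence central, and two distinct
   central ones <x>, <y> of order p give a similar permutation on the coset
   spaces of <x>, <y> and <xy>.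
   Conversely, if subgroups of prime order are unique, then for every prime p
   some point has a p'-stabiliser (otherwise the subgroup of order p would
   act trivially).  An element theta of the 2-closure agrees at that point
   with some g_p whose p-part is then determined, and since p-parts are
   multiplicative in a nilpotent group, the product of the p-parts of the g_p
   induces theta. *)

Section Rcosets.
Variable gT : finGroupType.
Implicit Types (G H N : {group gT}) (g h : gT).

Lemma rcosets_closed H G A g : A \in rcosets H G -> g \in G -> A :* g \in rcosets H G.
Proof. by move=> AHG gG; rewrite -rcosetE (actsP (actsRs_rcosets H G)). Qed.

Lemma rcosets_gcoreP H G g h :
  reflect {in rcosets H G, forall A, A :* g = A :* h} (g * h^-1 \in gcore H G).
Proof.
rewrite -astabRs_rcosets; apply: (iffP astabP) => /= fixA A /fixA.
  by rewrite rcosetE rcosetM => /(canRL (rcosetKV h)).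
by rewrite rcosetE rcosetM => ->; rewrite rcosetK.
Qed.

Lemma gcore_norm_id H G : G \subset 'N(H) -> gcore H G = H.
Proof. by move=> nHG; apply/eqP; rewrite eqEsubset gcore_sub gcore_max. Qed.

Lemma rcosets_normP H G g h : G \subset 'N(H) ->
  reflect {in rcosets H G, forall A, A :* g = A :* h} (g * h^-1 \in H).
Proof. by move=> nHG; rewrite -{2}(gcore_norm_id nHG); apply: rcosets_gcoreP. Qed.

Lemma norm_rcosetM_id N z c : z \in 'N(N) -> c \in N -> N :* z :* c = N :* z.
Proof.
move=> zN cN; rewrite -rcosetM (conjgCV z c) rcosetM.
by rewrite [N :* _ ^ _]rcoset_id // memJ_norm ?groupV.
Qed.

End Rcosets.

Section CosetAction.
Variables (gT : finGroupType) (G : {group gT}) (I : Type).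
Variables (H : I -> {group gT}) (tau : I -> gT).

(* G acts on the disjoint union of the spaces of right cosets of the H i;
   sets that are not such cosets are extra fixed points. *)
Definition coset_act (a : I * {set gT}) g : I * {set gT} :=
  if a.2 \in rcosets (H a.1) G then (a.1, a.2 :* g) else a.

Lemma coset_act1 a : coset_act a 1 = a.
Proof. by rewrite /coset_act rcoset1; case: ifP => // _; case: a. Qed.

Lemma coset_actM a g h : g \in G -> h \in G ->
  coset_act a (g * h) = coset_act (coset_act a g) h.
Proof.
case: a => i A gG hG; rewrite /coset_act /=.
by case: ifP => AHG; rewrite ?AHG //= rcosets_closed // rcosetM.
Qed.

Lemma coset_act_fst a g : (coset_act a g).1 = a.1.
Proof. by rewrite /coset_act; case: ifP. Qed.

Lemma coset_act_eqP i A g h : A \in rcosets (H i) G ->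
  coset_act (i, A) g = coset_act (i, A) h <-> A :* g = A :* h.
Proof. by rewrite /coset_act /= => ->; split=> [[]|->]. Qed.

Hypothesis tauG : forall i, tau i \in G.
Hypothesis cosets_pairwise : forall i j,
  {in rcosets (H i) G & rcosets (H j) G, forall A B,
    exists2 g, g \in G & A :* g = A :* tau i /\ B :* g = B :* tau j}.
Hypothesis gcores_TI : {in G, forall g, (forall i, g \in gcore (H i) G) -> g = 1}.
Hypothesis tau_nonuniform :
  ~ exists2 g, g \in G & forall i, g * (tau i)^-1 \in gcore (H i) G.

Lemma coset_act_not_two_closed : ~ two_closed G.
Proof.
move=> tcG; pose theta a := coset_act a (tau a.1).
have coset_act_faithful : {in G &, injective (fun g a => coset_act a g)}.
  move=> g h gG hG /= gh; apply/eqP; rewrite eq_mulgV1; apply/eqP.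
  apply: gcores_TI => [|i]; first by rewrite groupM ?groupV.
  apply/rcosets_gcoreP => A AHG; apply/(coset_act_eqP g h AHG).
  exact: (congr1 (fun f => f (i, A)) gh).
have theta_bij : bijective theta.
  exists (fun a => coset_act a (tau a.1)^-1) => a; rewrite /theta coset_act_fst.
    by rewrite -coset_actM ?groupV // mulgV coset_act1.
  by rewrite -coset_actM ?groupV // mulVg coset_act1.
have fixed i A g : A \notin rcosets (H i) G -> coset_act (i, A) g = (i, A).
  by rewrite /coset_act /= => /negPf->.
have theta_pairs a b :
    exists2 g, g \in G & theta a = coset_act a g /\ theta b = coset_act b g.
  case: a b => i A [j B]; rewrite /theta /=.
  have [AHG|/fixed fA] := boolP (A \in rcosets (H i) G); last first.
    by exists (tau j); rewrite ?fA.
  have [BHG|/fixed fB] := boolP (B \in rcosets (H j) G); last first.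
    by exists (tau i); rewrite ?fB.
  have [g gG [eA eB]] := cosets_pairwise AHG BHG.
  exists g => //; split; first by apply/(coset_act_eqP _ _ AHG); rewrite eA.
  by apply/(coset_act_eqP _ _ BHG); rewrite eB.
have [g gG theta_g] := tcG _ coset_act coset_act1 coset_actM coset_act_faithful
  theta theta_bij theta_pairs.
apply: tau_nonuniform; exists g => // i; apply/rcosets_gcoreP => A AHG.
by apply/(coset_act_eqP _ _ AHG); rewrite -theta_g.
Qed.

End CosetAction.

Section NotTwoClosed.
Variable gT : finGroupType.
Implicit Types (G H : {group gT}) (x y : gT).

Lemma corefree_not_two_closed G H :
  nilpotent G -> H \subset G -> H :!=: 1 -> gcore H G = 1 -> ~ two_closed G.
Proof.
move=> nilG sHG ntH coreH1.
pose M := <<class_support H G>>%G; pose N := [~: M, G]%G.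
have nMG : G \subset 'N(M) by rewrite norms_gen ?class_support_norm.
have nNG : G \subset 'N(N) := commg_normr G M.
have sHM : H \subset M := subset_trans (sub_class_support G H) (subset_gen _).
have ntM : M :!=: 1 by apply: contraNneq ntH => M1; rewrite -subG1 -M1.
have ltNM : N \proper M.
  by apply: (nil_comm_properl nilG); rewrite ?subsetI ?subxx // gen_subG class_support_subG.
have not_sHN : ~~ (H \subset N).
  apply: contraL ltNM => sHN; rewrite properE negb_and negbK orbC.
  by rewrite gen_subG class_support_sub_norm.
have [t Ht tN] := subsetPn not_sHN; have tG := subsetP sHG t Ht.
(* t ^ w = t * [~ t, w] fixes H :* w, and moves every N :* v like t. *)
have HN_pair : {in rcosets H G & rcosets N G, forall A B,
    exists2 g, g \in G & A :* g = A :* 1 /\ B :* g = B :* t}.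
  move=> _ _ /rcosetsP[w wG ->] /rcosetsP[v vG ->]; exists (t ^ w); rewrite ?groupJ //.
  split; first by rewrite -rcosetM -conjgC rcosetM rcoset_id ?rcoset1.
  rewrite conjg_mulR rcosetM -(rcosetM _ v t) norm_rcosetM_id ?mem_commg ?(subsetP sHM) //.
  by rewrite (subsetP nNG) ?groupM.
apply: (@coset_act_not_two_closed _ G bool (fun b => if b then H else N)
  (fun b => if b then 1 else t)) => [[]//|[] [] A B /= AHG BNG||].
- by exists 1.
- exact: HN_pair.
- by have [g gG [eB eA]] := HN_pair B A BNG AHG; exists g.
- by exists t.
- by move=> g _ /(_ true); rewrite coreH1 => /set1P.
case=> g _ core_g; have := core_g true; rewrite coreH1 invg1 mulg1 => /set1P g1.
have := core_g false; rewrite g1 mul1g groupV => /(subsetP (gcore_sub _ _)) tN'.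
by rewrite tN' in tN.
Qed.

Lemma prime_cycles_TI x y :
  prime #[x] -> #[x] = #[y] -> <[x]> != <[y]> -> <[x]> :&: <[y]> = 1.
Proof.
move=> px oxy neq_xy; apply: (prime_TIg px); apply: contra neq_xy => sxy.
by rewrite eqEcard sxy -!orderE oxy /=.
Qed.

Lemma central_prime_cycles_not_two_closed G x y :
    x \in 'Z(G) -> y \in 'Z(G) -> prime #[x] -> #[x] = #[y] -> <[x]> != <[y]> ->
  ~ two_closed G.
Proof.
move=> xZ yZ px oxy neq_xy; have TIxy := prime_cycles_TI px oxy neq_xy.
have [xG yG] := (subsetP (center_sub G) x xZ, subsetP (center_sub G) y yZ).
pose K i := match i with 0 => <[x]>%G | 1 => <[y]>%G | _ => <[x * y]>%G end.
pose tau i := if i is _.+2 then x else 1.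
have KZ i : K i \subset 'Z(G) by case: i => [|[|i]]; rewrite cycle_subG ?groupM.
have nKG i : G \subset 'N(K i) := normal_norm (sub_center_normal (KZ i)).
have coreK i : gcore (K i) G = K i := gcore_norm_id (nKG i).
apply: (@coset_act_not_two_closed _ G nat K tau) => [i||g gG coreg|].
- by case: i => [|[|i]] //=; rewrite group1.
- have pair_mod i j g : g \in G -> g * (tau i)^-1 \in K i -> g * (tau j)^-1 \in K j ->
      {in rcosets (K i) G & rcosets (K j) G, forall A B,
        exists2 g', g' \in G & A :* g' = A :* tau i /\ B :* g' = B :* tau j}.
    move=> gG /(rcosets_normP _ _ (nKG i)) eAi /(rcosets_normP _ _ (nKG j)) eBj A B AK BK.
    by exists g; last split; [|exact: eAi|exact: eBj].
  case=> [|[|i]] [|[|j]]; [ apply: (pair_mod _ _ 1) | apply: (pair_mod _ _ 1)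
    | apply: (pair_mod _ _ x) | apply: (pair_mod _ _ 1) | apply: (pair_mod _ _ 1)
    | apply: (pair_mod _ _ y^-1) | apply: (pair_mod _ _ x) | apply: (pair_mod _ _ y^-1)
    | apply: (pair_mod _ _ x) ];
  by rewrite /= ?invg1 ?mulg1 ?mulgV ?group1 ?groupV ?cycle_id -?invMg ?groupV ?cycle_id.
- have := coreg 1%N; have := coreg 0%N; rewrite !coreK => gx gy.
  have : g \in <[x]> :&: <[y]> by rewrite inE gx gy.
  by rewrite TIxy => /set1P.
case=> g _ coreg; have := coreg 2%N; have := coreg 1%N; have := coreg 0%N.
rewrite !coreK /= invg1 !mulg1 => gx gy gxy.
have : g \in <[x]> :&: <[y]> by rewrite inE gx gy.
rewrite TIxy => /set1P g1.
have xK : x \in <[x * y]> by move: gxy; rewrite g1 mul1g groupV.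
have yK : y \in <[x * y]> by rewrite -[X in X \in _](mulKg x) groupM ?groupV ?cycle_id.
move: neq_xy; rewrite (eq_subG_cyclic (cycle_cyclic (x * y))) ?cycle_subG //.
by rewrite -!orderE oxy eqxx.
Qed.

End NotTwoClosed.

Definition unique_prime_cycles (gT : finGroupType) (G : {set gT}) :=
  {in G &, forall x y, prime #[x] -> #[x] = #[y] -> <[x]> = <[y]>}.

Section UniquePrimeCycles.
Variable gT : finGroupType.
Implicit Types (G P : {group gT}) (x y : gT).

Lemma two_closed_prime_central G x :
  nilpotent G -> two_closed G -> x \in G -> prime #[x] -> x \in 'Z(G).
Proof.
move=> nilG tcG xG px; have sXG : <[x]> \subset G by rewrite cycle_subG.
have ntX : <[x]> :!=: 1 by rewrite cycle_eq1; apply: contraTneq px => ->; rewrite order1.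
have coreX : gcore <[x]> G = <[x]>.
  apply/eqP; rewrite eqEsubset gcore_sub; apply: contraT => /(prime_TIg px).
  by rewrite (setIidPr (gcore_sub _ _)) => /(corefree_not_two_closed nilG sXG ntX)/(_ tcG).
have nsXG : <[x]> <| G by rewrite -coreX gcore_normal.
have := meet_center_nil nilG nsXG ntX.
by rewrite -cycle_subG; apply: contraR => /(prime_TIg px)->.
Qed.

Lemma two_closed_unique_prime_cycles G :
  nilpotent G -> two_closed G -> unique_prime_cycles G.
Proof.
move=> nilG tcG x y xG yG px oxy; apply/eqP; apply: contraT => neq_xy.
have py : prime #[y] by rewrite -oxy.
by case: (central_prime_cycles_not_two_closed (two_closed_prime_central nilG tcG xG px)
  (two_closed_prime_central nilG tcG yG py) px oxy neq_xy).
Qed.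

Lemma unique_prime_cycles_Ohm1 G P (p : nat) : unique_prime_cycles G -> P \subset G ->
  p.-group P -> P :!=: 1 -> #|'Ohm_1(P)| = p.
Proof.
move=> uG sPG pP ntP; have [pr_p p_dv_P _] := pgroup_pdiv pP ntP.
have [z zP oz] := Cauchy pr_p p_dv_P.
suff -> : 'Ohm_1(P) = <[z]> by [].
apply/eqP; rewrite eqEsubset Ohm1Eprime cycle_subG mem_gen ?inE ?zP ?oz //= andbT.
rewrite gen_subG; apply/subsetP => u /setIdP[uP pr_u]; change (u \in <[z]>).
have /eqP ou : #[u] \in (p : nat_pred) by rewrite -pnatE //; apply: mem_p_elt pP uP.
suff <- : <[u]> = <[z]> by apply: cycle_id.
by apply: uG; rewrite ?(subsetP sPG) ?ou ?oz.
Qed.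

Lemma nil_unique_prime_cycles_structure G : nilpotent G -> unique_prime_cycles G ->
  cyclic G \/ exists (n : nat) (Q C : {group gT}),
     [/\ 3 <= n, Q \x C = G, Q \isog 'Q_(2 ^ n), cyclic C & odd #|C|].
Proof.
move=> nilG uG; pose Q := 'O_2(G)%G; pose C := 'O_2^'(G)%G.
have dQC : Q \x C = G := nilpotent_pcoreC 2 nilG.
have [sQG sCG] : Q \subset G /\ C \subset G by split; apply: pcore_sub.
have [pQ pC] : 2.-group Q /\ 2^'.-group C by split; apply: pcore_pgroup.
have cycC : cyclic C.
  apply: nil_Zgroup_cyclic (nilpotentS sCG nilG); apply/forall_inP => V /SylowP[p _ sylV].
  have [sVC pV] := (pHall_sub sylV, pHall_pgroup sylV).
  have [->|ntV] := eqVneq (V : {set gT}) 1; first exact: cyclic1.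
  have /(prime_Ohm1P pV ntV)/orP[//|/andP[/eqP p2 _]] :=
    unique_prime_cycles_Ohm1 uG (subset_trans sVC sCG) pV ntV.
  rewrite p2 in pV; by rewrite trivg_card1 (pnat_1 pV (pgroupS sVC pC)) in ntV.
have [cycQ|ncycQ] := boolP (cyclic Q).
  by left; rewrite (cyclic_dprod dQC cycQ cycC) (pnat_coprime pQ pC).
have ntQ : Q :!=: 1 by apply: contraNneq ncycQ => ->; apply: cyclic1.
have /(prime_Ohm1P pQ ntQ) := unique_prime_cycles_Ohm1 uG sQG pQ ntQ.
rewrite (negPf ncycQ) => /andP[_ /eqP/quaternion_classP[n n3 isoQ]].
by right; exists n, Q, C; rewrite odd_2'nat.
Qed.

Lemma cyclic_unique_prime_cycles G : cyclic G -> unique_prime_cycles G.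
Proof.
move=> cycG x y xG yG _ oxy; apply/eqP.
by rewrite (eq_subG_cyclic cycG) ?cycle_subG // -!orderE oxy.
Qed.

Lemma Ohm1_prime_cycle P (p : nat) x : prime p -> #|'Ohm_1(P)| = p ->
  x \in P -> #[x] = p -> <[x]> = 'Ohm_1(P).
Proof.
move=> pr_p oOhm xP ox; apply/eqP; rewrite eqEcard -orderE ox oOhm leqnn andbT.
by rewrite Ohm1Eprime cycle_subG mem_gen // inE xP ox.
Qed.

Lemma quaternion_by_odd_unique_prime_cycles G (n : nat) (Q C : {group gT}) :
    3 <= n -> Q \x C = G -> Q \isog 'Q_(2 ^ n) -> cyclic C -> odd #|C| ->
  unique_prime_cycles G.
Proof.
move=> n3 dQC isoQ cycC oddC x y xG yG px oxy.
have oQ : #|Q| = (2 ^ n)%N by rewrite (card_isog isoQ) card_quaternion.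
have pQ : 2.-group Q by rewrite /pgroup oQ pnatX pnat_id.
have pC : 2^'.-group C by rewrite /pgroup -odd_2'nat.
have [hallQ hallC] := coprime_mulpG_Hall (dprodW dQC) pQ pC.
have [nsQG nsCG] := dprod_normal2 dQC.
have [x2|x_odd] := eqVneq #[x] 2.
  have ntQ : Q :!=: 1.
    by rewrite -cardG_gt1 oQ (leq_trans _ (ltn_expl n (ltnSn 1))) // ltnS (leq_trans _ n3).
  have oOhm : #|'Ohm_1(Q)| = 2.
    apply/(prime_Ohm1P pQ ntQ); rewrite eqxx; apply/orP; right.
    by apply/eqP/quaternion_classP; exists n.
  have inQ u : u \in G -> #[u] = 2 -> u \in Q.
    by move=> uG ou; rewrite (mem_normal_Hall hallQ nsQG uG) /p_elt ou pnat_id.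
  by rewrite !(Ohm1_prime_cycle _ oOhm) ?inQ // -oxy.
have inC u : u \in G -> #[u] = #[x] -> u \in C.
  by move=> uG ou; rewrite (mem_normal_Hall hallC nsCG uG) /p_elt ou (pnatE _ px) !inE.
by apply: (cyclic_unique_prime_cycles cycC); rewrite ?inC.
Qed.

End UniquePrimeCycles.

Lemma groupconstt (gT : finGroupType) (G : {group gT}) pi x : x \in G -> x.`_pi \in G.
Proof. by move=> xG; apply: subsetP (cycle_constt pi x); rewrite cycle_subG. Qed.

Section NilpotentConstt.
Variables (gT : finGroupType) (G : {group gT}) (pi : nat_pred).
Hypothesis nilG : nilpotent G.

Lemma nil_constt_divgr x : x \in G -> x.`_pi = divgr 'O_pi(G) 'O_pi^'(G) x.
Proof.
move=> xG; have memO rho y : y \in G -> rho.-elt y -> y \in 'O_rho(G).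
  by move=> yG; rewrite (mem_normal_Hall (nilpotent_pcore_Hall rho nilG)) ?pcore_normal.
have /dprodP[_ _ _ tiOO'] := nilpotent_pcoreC pi nilG.
by rewrite -{2}(consttC pi x) divgrMid ?memO ?groupconstt ?p_elt_constt.
Qed.

Lemma nil_consttM : {in G &, {morph constt^~ pi : x y / x * y}}.
Proof.
move=> x y xG yG /=; rewrite !nil_constt_divgr ?groupM //.
have /dprodP[_ defG cOO' tiOO'] := nilpotent_pcoreC pi nilG.
have complO : 'O_pi^'(G)%G \in [complements to 'O_pi(G) in G] by apply/complP.
exact: divgrM complO cOO' x y xG yG.
Qed.

Lemma nil_constt_prod I (r : seq I) (P : pred I) (F : I -> gT) :
    (forall i, F i \in G) ->
  (\prod_(i <- r | P i) F i).`_pi = \prod_(i <- r | P i) (F i).`_pi.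
Proof.
move=> FG; suff [] : \prod_(i <- r | P i) F i \in G /\
    (\prod_(i <- r | P i) F i).`_pi = \prod_(i <- r | P i) (F i).`_pi by [].
elim/big_rec2: _ => [|i x y _ [xG <-]]; first by rewrite group1 constt1.
by rewrite groupM // nil_consttM.
Qed.

End NilpotentConstt.

Section FaithfulAction.
Variables (gT : finGroupType) (G : {group gT}) (Omega : Type).
Variable act : Omega -> gT -> Omega.
Hypothesis act1 : forall a, act a 1 = a.
Hypothesis actM : forall a g h, g \in G -> h \in G -> act a (g * h) = act (act a g) h.
Hypothesis act_faithful : {in G &, injective (fun g a => act a g)}.

Lemma act_fix_cycle a k v : k \in G -> act a k = a -> v \in <[k]> -> act a v = a.
Proof.
move=> kG ak /cycleP[n ->]; elim: n => [|n IHn]; first by rewrite act1.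
by rewrite expgS actM ?groupX // ak.
Qed.

Lemma act_fix_mulV a g h : g \in G -> h \in G ->
  act a (g * h^-1) = a <-> act a g = act a h.
Proof.
move=> gG hG; split=> agh; first by rewrite -{2}agh -actM ?groupM ?groupV ?mulgKV.
by rewrite actM ?groupV // agh -actM ?groupV // mulgV act1.
Qed.

Lemma act_fix_prod b I (r : seq I) (P : pred I) (F : I -> gT) :
    (forall i, P i -> F i \in G /\ act b (F i) = b) ->
  act b (\prod_(i <- r | P i) F i) = b.
Proof.
move=> FGb; suff [] : \prod_(i <- r | P i) F i \in G /\
    act b (\prod_(i <- r | P i) F i) = b by [].
elim/big_rec: _ => [|i k /FGb[FiG bFi] [kG bk]]; first by rewrite group1 act1.
by rewrite groupM // actM // bFi bk.
Qed.

Hypothesis uG : unique_prime_cycles G.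

Lemma exists_p'_stabilizer (a0 : Omega) (p : nat) :
  exists a, {in G, forall k, act a k = a -> p^'.-elt k}.
Proof.
apply: NNPP => no_a.
have fix_order_p a : exists2 v, v \in G & [/\ act a v = a, prime p & #[v] = p].
  apply: NNPP => no_v; apply: no_a; exists a => k kG ak; apply: contraT.
  rewrite /p_elt p'natEpi ?order_gt0 // mem_primes negbK => /and3P[pr_p _ p_dv_k].
  have [v vk ov] := Cauchy pr_p p_dv_k; case: no_v; exists v.
    by apply: subsetP vk; rewrite cycle_subG.
  by split=> //; apply: act_fix_cycle kG ak vk.
have [v0 v0G [_ pr_p ov0]] := fix_order_p a0.
suff v0_1 : v0 = 1 by rewrite -ov0 v0_1 order1 in pr_p.
apply: act_faithful => //; apply: functional_extensionality => a /=.
have [v vG [av _ ov]] := fix_order_p a.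
by rewrite act1; apply: (act_fix_cycle vG av); rewrite -(uG v0G vG) ?cycle_id ?ov0 ?ov.
Qed.

Hypothesis nilG : nilpotent G.
Variable theta : Omega -> Omega.
Hypothesis theta_2closure :
  forall a b, exists2 g, g \in G & theta a = act a g /\ theta b = act b g.

Lemma two_closure_constt (a0 : Omega) (p : nat) : exists c, c \in G /\
  forall b h, h \in G -> theta b = act b h -> act b h.`_p = act b c.`_p.
Proof.
have [a p'Ga] := exists_p'_stabilizer a0 p; have [c cG [ea _]] := theta_2closure a a.
exists c; split=> // b h hG eb; have [h' h'G [ea' eb']] := theta_2closure a b.
have h'c : h'.`_p = c.`_p.
  have /constt1P : p^'.-elt (h' * c^-1).
    by apply: p'Ga; rewrite ?groupM ?groupV //; apply/act_fix_mulV; rewrite -?ea.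
  by rewrite (nil_consttM _ nilG) ?groupV // consttV => /eqP; rewrite -eq_mulgV1 => /eqP.
rewrite -h'c -act_fix_mulV ?groupconstt // -consttV -(nil_consttM _ nilG) ?groupV //.
by apply: (act_fix_cycle _ _ (cycle_constt _ _)); rewrite ?groupM ?groupV ?act_fix_mulV -?eb.
Qed.

Lemma two_closure_in_act (a0 : Omega) : exists2 g, g \in G & forall b, theta b = act b g.
Proof.
have [c cP] := functional_choice _ (two_closure_constt a0).
have cG p : c p \in G by case: (cP p).
pose g := \prod_(p < #|G|.+1) (c p).`_p.
have gG : g \in G by apply: group_prod => p _; apply: groupconstt.
have g_q q : q < #|G|.+1 -> g.`_q = (c q).`_q.
  move=> lt_q; rewrite (nil_constt_prod _ nilG) => [|p]; last exact: groupconstt.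
  rewrite (big_only1 (Ordinal lt_q)) //=; first exact/constt_p_elt/p_elt_constt.
  move=> p ne_pq _; apply/constt1P.
  apply: sub_p_elt (p_elt_constt p _) => r /eqnP->; rewrite !inE.
  by apply: contra ne_pq => /eqP eq_pq; apply/eqP/val_inj.
exists g => // b; have [h0 h0G [e0 _]] := theta_2closure b b.
rewrite e0; apply/esym/act_fix_mulV => //.
rewrite -(prod_constt (g * h0^-1)) big_nat_cond.
apply: act_fix_prod => p /andP[/andP[_ lt_p] _]; rewrite groupconstt ?groupM ?groupV //.
have lt_pG : p < #|G|.+1.
  by rewrite (leq_trans lt_p) // ltnS dvdn_leq ?cardG_gt0 ?order_dvdG ?groupM ?groupV.
rewrite (nil_consttM _ nilG) ?groupV // consttV g_q // act_fix_mulV ?groupV ?groupconstt //.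
by case: (cP p) => _ /(_ b h0 h0G e0).
Qed.

End FaithfulAction.

Lemma unique_prime_cycles_two_closed (gT : finGroupType) (G : {group gT}) :
  nilpotent G -> unique_prime_cycles G -> two_closed G.
Proof.
move=> nilG uG Omega act act1 actM act_faithful theta _ theta_2closure.
have [[a0 _]|no_point] := classic (exists a : Omega, True).
  exact: (two_closure_in_act act1 actM act_faithful uG nilG theta_2closure a0).
by exists 1 => // a; case: no_point; exists a.
Qed.

Theorem theorem2 (gT : finGroupType) (G : {group gT}) :
  nilpotent G ->
  (two_closed G <->
   cyclic G \/
   exists (n : nat) (Q C : {group gT}),
     [/\ 3 <= n, Q \x C = G, Q \isog 'Q_(2 ^ n), cyclic C & odd #|C|]).
Proof.
move=> nilG; split=> [tcG | G_struct].
  exact: nil_unique_prime_cycles_structure nilG (two_closed_unique_prime_cycles nilG tcG).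
apply: unique_prime_cycles_two_closed nilG _.
case: G_struct => [|[n [Q [C [n3 dQC isoQ cycC oddC]]]]].
  exact: cyclic_unique_prime_cycles.
exact: quaternion_by_odd_unique_prime_cycles n3 dQC isoQ cycC oddC.
Qed.
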